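(* For $t=3$ topics, $r_3 = \frac{5}{6}$.
   Context: Let $t$ be a positive integer (the number of topics). A voter matrix with $t$ topics is a matrix $V\in\{Y,N\}^{n\times t}$ for some positive integer $n$ (rows are voters), subject to the standing assumption that in every column the number of entries $Y$ is at least the number of entries $N$. $\mathcal{V}_t$ is the set of all voter matrices with $t$ topics and any number of voters. A proposal is a vector $p\in\{Y,N\}^t$. A voter $v$ supports $p$ if the Hamming distance between $v$ and $p$ is at most $t/2$; $p$ is supported by $V$ if at least $n/2$ rows of $V$ support $p$. For $i=1,\dots,t$ let $m_i$ be the fraction of entries $Y$ in column $i$ of $V$, and $m_V=\frac1t\sum_i m_i$. For a proposal $p$ let $m_i'=m_i$ if $p_i=Y$ and $m_i'=1-m_i$ if $p_i=N$; set $R_p=\frac1t\sum_i m_i'$ and $r_p=R_p/m_V$. Let $r_V=\max r_p$, the maximum over all proposals $p$ supported by $V$, and $r_t=\inf_{V\in\mathcal{V}_t} r_V$. *)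

From HB Require Import structures.
From mathcomp Require Import all_boot all_order all_algebra.
From mathcomp Require Import boolp classical_sets reals.
Set Implicit Arguments. Unset Strict Implicit. Unset Printing Implicit Defensive.
Import Order.TTheory GRing.Theory Num.Theory.
Local Open Scope ring_scope.
Local Open Scope classical_set_scope.

(* Entries: true = Y, false = N.  A matrix V : 'M[bool]_(n, t) has n voters (rows)
   and t topics (columns); a proposal is p : {ffun 'I_t -> bool}. *)
Section Voting.
Variables (R : realType) (t n : nat) (V : 'M[bool]_(n, t)).

Definition countY (j : 'I_t) : nat := #|[set i : 'I_n | V i j]|.
Definition countN (j : 'I_t) : nat := #|[set i : 'I_n | ~~ V i j]|.

Definition is_voter_matrix : bool :=
  (0 < n)%N && [forall j : 'I_t, (countN j <= countY j)%N].

Definition hamming (i : 'I_n) (p : {ffun 'I_t -> bool}) : nat :=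
  #|[set j : 'I_t | V i j != p j]|.

Definition supports (i : 'I_n) (p : {ffun 'I_t -> bool}) : bool :=
  (2 * hamming i p <= t)%N.

Definition supported (p : {ffun 'I_t -> bool}) : bool :=
  (n <= 2 * #|[set i : 'I_n | supports i p]|)%N.

Definition m_col (j : 'I_t) : R := (countY j)%:R / n%:R.
Definition m_V : R := (\sum_(j < t) m_col j) / t%:R.
Definition R_p (p : {ffun 'I_t -> bool}) : R :=
  (\sum_(j < t) (if p j then m_col j else 1 - m_col j)) / t%:R.
Definition r_p (p : {ffun 'I_t -> bool}) : R := R_p p / m_V.

(* maximum of r_p over the supported proposals (a nonempty finite set:
   p or its complement is always supported; all r_p are >= 0). *)
Definition r_V : R := \big[Num.max/0]_(p : {ffun 'I_t -> bool} | supported p) r_p p.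
End Voting.

Definition r_t (R : realType) (t : nat) : R :=
  inf [set x : R | exists (n : nat) (V : 'M[bool]_(n, t)),
                     is_voter_matrix V /\ x = r_V R V].

(* For a voter matrix, r_p = A(p)/S, where S is the total number of Y entries
   and the agreement A(p) counts the entries that coincide with p.

   Lower bound: write p_k for the proposal that is Y on every topic but k.
   Going through the eight ballots, the number of Y's on a ballot is its k-th
   entry plus [it supports YYY] plus [it supports p_k]; summed over the voters,
   the Y-counts of the two topics other than k add up to the numbers of
   supporters of YYY and of p_k.  Both columns have a Y-majority, so YYY or p_k
   is supported.  A supported YYY has ratio 1.  Otherwise every p_k is
   supported; a ballot not supporting YYY has at most one Y, so
   S <= n + 2 #supporters(YYY) < 2n, and A(p_0) + A(p_1) + A(p_2) = S + 3n
   > 5S/2, so one of the p_k has ratio at least 5/6.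

   Upper bound: with 3m+3 voters YYY and m+3 voters for each ballot with a
   single Y, every column has 4m+6 Y's out of 6m+12 and YYY is unsupported, so
   every supported proposal has an N and ratio at most
   (10m+18)/(12m+18) = 5/6 + 1/(4m+6). *)

Set Warnings "-notation-overridden,-ambiguous-paths".
From HB Require Import structures.
From mathcomp Require Import all_boot all_order all_algebra.
From mathcomp Require Import boolp classical_sets reals.
From mathcomp Require Import zify ring lra.
Set Implicit Arguments. Unset Strict Implicit. Unset Printing Implicit Defensive.
Import Order.TTheory GRing.Theory Num.Theory.

Lemma card_classic_set (T : finType) (P : pred T) :
  #|[set x | P x]%classic| = \sum_x P x.
Proof.
rewrite -sum1_card big_mkcond /=; apply: eq_bigr => x _.
suff -> : x \in [set x | P x]%classic = P x by case: (P x).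
by apply/idP/idP => [/set_mem|/mem_set].
Qed.

Lemma sum_nth_count (T : Type) (x0 : T) (s : seq T) (P : pred T) :
  \sum_(i < size s) P (nth x0 s i) = count P s.
Proof.
rewrite -sum1_count [RHS](big_nth x0) big_mkord [RHS]big_mkcond /=.
by apply: eq_bigr => i _; case: (P _).
Qed.

Definition j0 : 'I_3 := @Ordinal 3 0 isT.
Definition j1 : 'I_3 := @Ordinal 3 1 isT.
Definition j2 : 'I_3 := @Ordinal 3 2 isT.

Lemma ord3_ind (P : 'I_3 -> Prop) : P j0 -> P j1 -> P j2 -> forall j, P j.
Proof.
move=> P0 P1 P2 [[|[|[|m]]] lt_m3] //.
- by rewrite (_ : Ordinal lt_m3 = j0) //; apply/val_inj.
- by rewrite (_ : Ordinal lt_m3 = j1) //; apply/val_inj.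
- by rewrite (_ : Ordinal lt_m3 = j2) //; apply/val_inj.
Qed.

Lemma big_ord3 (R : Type) (idx : R) (op : Monoid.law idx) (F : 'I_3 -> R) :
  \big[op/idx]_(j < 3) F j = op (op (F j0) (F j1)) (F j2).
Proof.
rewrite !big_ord_recl big_ord0 Monoid.mulm1 Monoid.mulmA.
by congr (op (op (F _) (F _)) (F _)); apply/val_inj.
Qed.

Definition allY (t : nat) : {ffun 'I_t -> bool} := [ffun=> true].
Definition allY_but (t : nat) (k : 'I_t) : {ffun 'I_t -> bool} := [ffun j => j != k].

Section Agreement.
Variables (t n : nat) (V : 'M[bool]_(n, t)).

Definition agreement (p : {ffun 'I_t -> bool}) : nat :=
  \sum_j (if p j then countY V j else countN V j).

Definition total_Y : nat := \sum_j countY V j.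

Definition supporters (p : {ffun 'I_t -> bool}) : nat := \sum_i supports V i p.

Lemma countYE j : countY V j = \sum_i V i j.
Proof. exact: card_classic_set. Qed.

Lemma countY_add_countN j : countY V j + countN V j = n.
Proof.
rewrite /countY /countN !card_classic_set -big_split /=.
rewrite -[RHS]card_ord -sum1_card; apply: eq_big => // i _.
by case: (V i j).
Qed.

Lemma supportedE p : supported V p = (n <= 2 * supporters p).
Proof. by rewrite /supported card_classic_set. Qed.

Lemma agreement_allY : agreement (allY t) = total_Y.
Proof. by apply: eq_bigr => j _; rewrite ffunE. Qed.

Lemma agreement_allY_but k : agreement (allY_but k) + 2 * countY V k = total_Y + n.
Proof.
rewrite /agreement /total_Y (bigD1 k) // [in RHS](bigD1 k) //= ffunE eqxx.
under eq_bigr => j jk do rewrite ffunE jk.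
rewrite /=; have := countY_add_countN k; lia.
Qed.

Lemma agreement_le_uniform c (p : {ffun 'I_t -> bool}) k :
  (forall j, countY V j = c) -> n <= 2 * c -> ~~ p k ->
  agreement p <= (n - c) + t.-1 * c.
Proof.
move=> colY col_majority /negbTE pk.
have colN j : countN V j = n - c by have := countY_add_countN j; rewrite colY; lia.
rewrite /agreement (bigD1 k) //= pk colN leq_add2l.
rewrite -[t in t.-1]card_ord -(cardC1 k) -sum_nat_const.
by apply: leq_sum => j _; rewrite colY colN; case: (p j); lia.
Qed.

Lemma total_Y_gt0 : is_voter_matrix V -> (0 < t)%N -> 0 < total_Y.
Proof.
case/andP=> n_gt0 /forallP colN_le t_gt0; pose j := Ordinal t_gt0.
rewrite /total_Y (bigD1 j) //=.
by have := countY_add_countN j; have := colN_le j; lia.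
Qed.

End Agreement.

Section Ratio.
Local Open Scope ring_scope.
Variables (R : realType) (t n : nat) (V : 'M[bool]_(n, t)).

Lemma r_pE p : (0 < n)%N -> (0 < t)%N ->
  r_p R V p = (agreement V p)%:R / (total_Y V)%:R.
Proof.
move=> n_gt0 t_gt0.
have n_neq0 : n%:R != 0 :> R by rewrite pnatr_eq0 -lt0n.
have t_neq0 : t%:R != 0 :> R by rewrite pnatr_eq0 -lt0n.
have R_pE : R_p R V p = (agreement V p)%:R / n%:R / t%:R.
  rewrite /R_p; congr (_ * _); rewrite /agreement natr_sum mulr_suml.
  apply: eq_bigr => j _; rewrite /m_col; case: (p j) => //.
  have sumYN : (countY V j)%:R + (countN V j)%:R = n%:R :> R.
    by rewrite -natrD countY_add_countN.
  by rewrite -sumYN; field; rewrite sumYN; exact: n_neq0.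
have m_VE : m_V R V = (total_Y V)%:R / n%:R / t%:R.
  by rewrite /m_V; congr (_ * _); rewrite /total_Y natr_sum mulr_suml.
rewrite /r_p R_pE m_VE.
have [->|S_neq0] := eqVneq (total_Y V)%:R (0 : R); first by rewrite !mul0r !invr0 !mulr0.
by field; rewrite S_neq0 n_neq0 t_neq0.
Qed.

Lemma r_p_le_r_V p : supported V p -> r_p R V p <= r_V R V.
Proof. by move=> supp_p; apply: (bigmax_sup p). Qed.

Lemma r_V_le x : 0 <= x -> (forall p, supported V p -> r_p R V p <= x) -> r_V R V <= x.
Proof. exact: bigmax_le. Qed.

Lemma r_V_le_uniform c : is_voter_matrix V -> (0 < t)%N ->
  (forall j, countY V j = c) -> ~~ supported V (allY t) ->
  r_V R V <= ((n - c) + t.-1 * c)%:R / (t * c)%:R.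
Proof.
move=> voter t_gt0 colY unsuppY; have [n_gt0 /forallP colN_le] := andP voter.
have col_majority : (n <= 2 * c)%N.
  have := countY_add_countN V (Ordinal t_gt0); have := colN_le (Ordinal t_gt0).
  by rewrite colY; lia.
apply: r_V_le => [|p supp_p]; first by rewrite divr_ge0 ?ler0n.
have [k pk] : exists k, ~~ p k.
  apply/existsP; apply: contraNT unsuppY; rewrite negb_exists => /forallP p_true.
  suff -> : allY t = p by [].
  by apply/ffunP => j; rewrite ffunE; apply/esym/negPn.
have S_eq : total_Y V = (t * c)%N.
  by rewrite /total_Y (eq_bigr _ (fun j _ => colY j)) sum_nat_const card_ord.
rewrite r_pE // S_eq ler_wpM2r ?invr_ge0 ?ler0n // ler_nat.
exact: agreement_le_uniform colY col_majority pk.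
Qed.

End Ratio.

Section ThreeTopics.
Variables (n : nat) (V : 'M[bool]_(n, 3)).

Lemma supports3E i p :
  supports V i p = (2 * ((V i j0 != p j0) + (V i j1 != p j1) + (V i j2 != p j2)) <= 3).
Proof. by rewrite /supports /hamming card_classic_set big_ord3. Qed.

Lemma row_weightE i k :
  \sum_j V i j = V i k + supports V i (allY 3) + supports V i (allY_but k).
Proof.
rewrite !supports3E big_ord3 !ffunE.
by move: k; apply: ord3_ind; case: (V i j0); case: (V i j1); case: (V i j2).
Qed.

Lemma row_weight_le i : \sum_j V i j <= 1 + 2 * supports V i (allY 3).
Proof.
rewrite supports3E big_ord3 !ffunE.
by case: (V i j0); case: (V i j1); case: (V i j2).
Qed.

Lemma total_Y_by_rows : total_Y V = \sum_i \sum_j V i j.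
Proof. by rewrite exchange_big; apply: eq_bigr => j _; rewrite countYE. Qed.

Lemma total_YE k :
  total_Y V = countY V k + supporters V (allY 3) + supporters V (allY_but k).
Proof.
rewrite total_Y_by_rows countYE /supporters -!big_split.
by apply: eq_bigr => i _; rewrite (row_weightE i k).
Qed.

Lemma total_Y_le : total_Y V <= n + 2 * supporters V (allY 3).
Proof.
rewrite total_Y_by_rows /supporters big_distrr -[X in X + _]card_ord -sum1_card.
rewrite -big_split.
by apply: leq_sum => i _; rewrite row_weight_le.
Qed.

Lemma exists_supported_agreeing : is_voter_matrix V ->
  exists2 p, supported V p & 5 * total_Y V <= 6 * agreement V p.
Proof.
case/andP => _ /forallP colN_le.
have colY j : n <= 2 * countY V j.
  by have := countY_add_countN V j; have := colN_le j; lia.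
have total_Y3 : total_Y V = countY V j0 + countY V j1 + countY V j2.
  by rewrite /total_Y big_ord3.
have [suppY|] := boolP (supported V (allY 3)).
  by exists (allY 3) => //; rewrite agreement_allY; lia.
rewrite supportedE -ltnNge => unsuppY.
have supp_allY_but k : supported V (allY_but k).
  rewrite supportedE; have := total_YE k; rewrite total_Y3.
  have := colY j0; have := colY j1; have := colY j2.
  by move: k; apply: ord3_ind => /=; lia.
have S_lt : total_Y V < 2 * n by have := total_Y_le; lia.
have A0 := agreement_allY_but V j0.
have A1 := agreement_allY_but V j1.
have A2 := agreement_allY_but V j2.
have : 5 * total_Y V <= 6 * agreement V (allY_but j0) \/
       5 * total_Y V <= 6 * agreement V (allY_but j1) \/
       5 * total_Y V <= 6 * agreement V (allY_but j2) by lia.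
by case=> [?|[?|?]]; [exists (allY_but j0) | exists (allY_but j1) | exists (allY_but j2)];
  rewrite ?supp_allY_but.
Qed.

End ThreeTopics.

Lemma r_V_ge_5_6 (R : realType) n (V : 'M[bool]_(n, 3)) :
  is_voter_matrix V -> (5 / 6 <= r_V R V)%R.
Proof.
move=> voter; have [p supp_p agree_p] := exists_supported_agreeing voter.
apply: le_trans (r_p_le_r_V R supp_p); have [n_gt0 _] := andP voter.
have S_gt0 := total_Y_gt0 voter isT.
rewrite r_pE // ler_pdivlMr ?ltr0n //.
have : ((5 * total_Y V)%:R <= (6 * agreement V p)%:R :> R)%R by rewrite ler_nat.
by rewrite !natrM; lra.
Qed.

Definition unit_ballot (t : nat) (k : 'I_t) : {ffun 'I_t -> bool} := [ffun j => j == k].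

Definition ballot_supports (t : nat) (q p : {ffun 'I_t -> bool}) : bool :=
  2 * \sum_j (q j != p j) <= t.

Definition ballots_mx (t : nat) (s : seq {ffun 'I_t -> bool}) : 'M[bool]_(size s, t) :=
  \matrix_(i, j) nth (allY t) s i j.

Section BallotsMatrix.
Variables (t : nat) (s : seq {ffun 'I_t -> bool}).

Lemma countY_ballots_mx j :
  countY (ballots_mx s) j = count (fun q : {ffun 'I_t -> bool} => q j) s.
Proof.
rewrite countYE -(sum_nth_count (allY t)).
by apply: eq_bigr => i _; rewrite mxE.
Qed.

Lemma supporters_ballots_mx p :
  supporters (ballots_mx s) p = count (fun q => ballot_supports q p) s.
Proof.
rewrite -(sum_nth_count (allY t)); apply: eq_bigr => i _.
rewrite /supports /hamming card_classic_set /ballot_supports.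
by under eq_bigr do rewrite mxE.
Qed.

End BallotsMatrix.

Section Family.
Variable m : nat.

Definition family_ballots : seq {ffun 'I_3 -> bool} :=
  nseq (m + 3) (unit_ballot j0) ++ nseq (m + 3) (unit_ballot j1) ++
  nseq (m + 3) (unit_ballot j2) ++ nseq (3 * m + 3) (allY 3).

Definition family := ballots_mx family_ballots.

Lemma size_family_ballots : size family_ballots = 6 * m + 12.
Proof. by rewrite !size_cat !size_nseq; lia. Qed.

Lemma countY_family j : countY family j = 4 * m + 6.
Proof.
rewrite countY_ballots_mx !count_cat !count_nseq !ffunE.
by move: j; apply: ord3_ind => /=; lia.
Qed.

Lemma family_voter : is_voter_matrix family.
Proof.
apply/andP; split; first by rewrite size_family_ballots; lia.
apply/forallP => j; have := countY_add_countN family j.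
by rewrite countY_family; have := size_family_ballots; lia.
Qed.

Lemma family_allY_unsupported : ~~ supported family (allY 3).
Proof.
rewrite supportedE supporters_ballots_mx !count_cat !count_nseq /ballot_supports.
by rewrite !big_ord3 !ffunE /=; have := size_family_ballots; lia.
Qed.

End Family.

Lemma r_V_family_le (R : realType) m :
  (r_V R (family m) <= 5 / 6 + (4 * m + 6)%:R^-1)%R.
Proof.
apply: le_trans (r_V_le_uniform R (family_voter m) isT (countY_family m)
                   (family_allY_unsupported m)) _.
rewrite size_family_ballots (_ : (_ - _ + _)%N = 10 * m + 18)%N; last by lia.
have c_gt0 : (0 < (4 * m + 6)%:R :> R)%R by rewrite ltr0n addnS.
rewrite ler_pdivrMr; last by rewrite natrM mulr_gt0.
have inv_c : ((4 * m + 6)%:R^-1 * (3%:R * (4 * m + 6)%:R) = 3 :> R)%R.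
  by rewrite mulrCA mulVf ?gt_eqF ?mulr1.
by rewrite natrM mulrDl inv_c !natrD ?natrM; lra.
Qed.

Local Open Scope ring_scope.

Lemma family_r_V_approx (R : realType) (e : R) :
  0 < e -> exists m, r_V R (family m) <= 5 / 6 + e.
Proof.
move=> e_gt0; exists (Num.truncn e^-1).
apply: le_trans (r_V_family_le R _) _; rewrite lerD2l.
have c_gt0 : 0 < (4 * Num.truncn e^-1 + 6)%:R :> R by rewrite ltr0n addnS.
rewrite invf_ple ?posrE //; apply: le_trans (ltW (truncnS_gt _)) _.
by rewrite ler_nat -addn1 leq_add // leq_pmull.
Qed.

Theorem theorem5p5 (R : realType) : r_t R 3 = 5 / 6.
Proof.
rewrite /r_t; set E := [set x | _]%classic.
have lbE : lbound E (5 / 6) by move=> _ [n [V [voter ->]]]; exact: r_V_ge_5_6.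
have family_in_E m : E (r_V R (family m)).
  by exists (size (family_ballots m)), (family m); split => //; exact: family_voter.
apply/eqP; rewrite eq_le; apply/andP; split; last first.
  by apply: lb_le_inf lbE; exists (r_V R (family 0)).
apply/ler_addgt0Pr => e /family_r_V_approx[m near_m].
by apply: le_trans near_m; apply: ge_inf (family_in_E m); exists (5 / 6).
Qed.
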